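(* Let $a(x),b(x),m(x)\in R_n=\mathbb{F}_2[x]/\langle x^n-1\rangle$ with $b(x)=m(x)a(x)$ in $R_n$. If the generalized bicycle code defined by $a(x)$ and $b(x)$ has dimension larger than zero, then its minimum distance is at most $\mathrm{wt}(m(x))+1$.
   Context: Elements of $R_n$ are identified with binary vectors of length $n$ via their representative of degree $<n$; $\mathrm{wt}$ is the number of nonzero coefficients. The generalized bicycle (GB) code defined by $a(x),b(x)$ is the CSS code on $2n$ qubits, vectors of $\mathbb{F}_2^{2n}$ written as pairs $(u(x),v(x))$, with $C_2=\{(c(x)a(x),c(x)b(x)):c\in R_n\}$ (X-stabilizers), $C_1=\{(u,v):u(x)b(x)+v(x)a(x)=0\text{ in }R_n\}$, $C_2'=\{(c(x)b(x^{-1}),c(x)a(x^{-1})):c\in R_n\}$ (Z-stabilizers), $C_1'=\{(u,v):u(x)a(x^{-1})+v(x)b(x^{-1})=0\}$, where $x^{-1}=x^{n-1}$. Its dimension is $\dim C_1-\dim C_2$ and its minimum distance is $\min\{\min_{w\in C_1\setminus C_2}\mathrm{wt}(w),\ \min_{w\in C_1'\setminus C_2'}\mathrm{wt}(w)\}$. *)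

From HB Require Import structures.
From mathcomp Require Import all_boot all_order all_algebra.
Set Implicit Arguments. Unset Strict Implicit. Unset Printing Implicit Defensive.
Import GRing.Theory.
Local Open Scope ring_scope.

(* R_n = F_2[x]/<x^n - 1>; an element is identified with its binary vector
   of length n (coefficients of its representative of degree < n). *)
Notation Rn n := 'rV['F_2]_n.

Section GB.
Variable n : nat.

Definition poly_of (u : Rn n) : {poly 'F_2} := \sum_(i < n) u 0 i *: 'X^i.
Definition rv_of (p : {poly 'F_2}) : Rn n :=
  \row_(i < n) (p %% ('X^n - 1))`_i.

Definition rmul (u v : Rn n) : Rn n := rv_of (poly_of u * poly_of v).
(* u(x^{-1}) with x^{-1} = x^{n-1} *)
Definition rinv (u : Rn n) : Rn n := rv_of (poly_of u \Po 'X^(n.-1)).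

Definition wt (u : Rn n) : nat := #|[set i : 'I_n | u 0 i != 0]|.
Definition wt2 (w : Rn n * Rn n) : nat := (wt w.1 + wt w.2)%N.

Definition C2 (a b : Rn n) : {set Rn n * Rn n} :=
  [set (rmul c a, rmul c b) | c : Rn n].
Definition C1 (a b : Rn n) : {set Rn n * Rn n} :=
  [set w | rmul w.1 b + rmul w.2 a == 0].
Definition C2' (a b : Rn n) : {set Rn n * Rn n} :=
  [set (rmul c (rinv b), rmul c (rinv a)) | c : Rn n].
Definition C1' (a b : Rn n) : {set Rn n * Rn n} :=
  [set w | rmul w.1 (rinv a) + rmul w.2 (rinv b) == 0].

Definition dimF2 (C : {set Rn n * Rn n}) : nat := \dim (span (enum C)).

Definition GB_dim (a b : Rn n) : nat := (dimF2 (C1 a b) - dimF2 (C2 a b))%N.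

(* minimum weight of a finite set of vectors; the default (2n+1) exceeds
   every possible weight and is only reached on the empty set *)
Definition min_wt (S : {set Rn n * Rn n}) : nat :=
  \big[minn/(2 * n).+1]_(w in S) wt2 w.

Definition GB_distance (a b : Rn n) : nat :=
  minn (min_wt (C1 a b :\: C2 a b)) (min_wt (C1' a b :\: C2' a b)).

End GB.

From mathcomp Require Import all_boot all_order all_algebra.
Set Implicit Arguments. Unset Strict Implicit. Unset Printing Implicit Defensive.
Import Order.TTheory GRing.Theory.
Local Open Scope ring_scope.

(* Since b = m a, the pair (1, m) satisfies 1 b + m a = 2 b = 0, so it lies
   in C1 and has weight wt m + 1.  It is not an X-stabilizer: if
   (1, m) = (c a, c b) then a is a unit of R_n, and then every (u, v) in C1
   (i.e. u b = v a) equals ((u c) a, (u c) b), so C1 = C2 and the code would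
   have dimension 0. *)

Lemma oppr_F2 (V : lmodType 'F_2) (x : V) : - x = x.
Proof. by rewrite -scaleN1r (_ : -1 = 1 :> 'F_2) ?scale1r //; exact/val_inj. Qed.

Lemma min_wt_le n (S : {set Rn n * Rn n}) w : w \in S -> (min_wt S <= wt2 w)%N.
Proof. by move=> wS; rewrite /min_wt -minEnat -leEnat (bigmin_inf w). Qed.

Lemma C1_eq_C2_rV0 (a b : Rn 0) : C1 a b = C2 a b.
Proof.
apply/setP => -[u v]; rewrite !inE (thinmx0 (_ + _)) eqxx; apply/esym/imsetP.
by exists 0; rewrite // (thinmx0 u) (thinmx0 v) !(thinmx0 (rmul _ _)).
Qed.

Lemma poly_ofE n (u : Rn n) : poly_of u = rVpoly u.
Proof. by rewrite /rVpoly poly_def; apply: eq_bigr => i _; rewrite valK. Qed.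

Section QuotientRing.
Variable k : nat.
Local Notation n := k.+1.

Lemma size_Xn1 : size ('X^n - 1 : {poly 'F_2}) = n.+1.
Proof. by rewrite -polyC1 size_XnsubC. Qed.

Lemma rv_of_poly_of (u : Rn n) : rv_of n (poly_of u) = u.
Proof.
rewrite poly_ofE /rv_of modp_small ?size_Xn1 ?ltnS ?size_poly //.
exact: (rVpolyK u).
Qed.

Lemma poly_of_rv_of p : poly_of (rv_of n p) = p %% ('X^n - 1).
Proof.
rewrite poly_ofE poly_rV_K // -ltnS -size_Xn1.
by rewrite ltn_modp -size_poly_eq0 size_Xn1.
Qed.

Lemma rv_of_modp p : rv_of n (p %% ('X^n - 1)) = rv_of n p.
Proof. by apply/rowP => i; rewrite !mxE modp_id. Qed.

Lemma rmulC (u v : Rn n) : rmul u v = rmul v u.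
Proof. by rewrite /rmul mulrC. Qed.

Lemma rmulA (u v w : Rn n) : rmul u (rmul v w) = rmul (rmul u v) w.
Proof.
rewrite /rmul !poly_of_rv_of -rv_of_modp modp_mul -[RHS]rv_of_modp.
by rewrite [in RHS]mulrC modp_mul mulrA mulrC.
Qed.

Definition rone : Rn n := rv_of n 1.

Lemma rmul1 (u : Rn n) : rmul rone u = u.
Proof.
rewrite /rmul poly_of_rv_of modp_small ?size_Xn1 ?size_poly1 //.
by rewrite mul1r rv_of_poly_of.
Qed.

Lemma wt_rone : wt rone = 1%N.
Proof.
rewrite /wt (_ : [set i | _] = [set ord0]) ?cards1 //; apply/setP => i.
by rewrite !inE mxE modp_small ?size_Xn1 ?size_poly1 // coefC; case: i => -[|j].
Qed.

End QuotientRing.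

Section BicycleCodes.
Variables (k : nat) (a b : Rn k.+1).

Lemma C2_sub_C1 : C2 a b \subset C1 a b.
Proof.
apply/subsetP => _ /imsetP[c _ ->]; rewrite inE /= -!rmulA [rmul b a]rmulC.
by rewrite addr_eq0 oppr_F2.
Qed.

Lemma C1_eq_C2_of_unit c : rmul c a = rone k -> C1 a b = C2 a b.
Proof.
move=> ca1; apply/eqP; rewrite eqEsubset C2_sub_C1 andbT.
apply/subsetP => -[u v]; rewrite inE addr_eq0 oppr_F2 /= => /eqP ub_va.
apply/imsetP; exists (rmul u c) => //; congr pair.
  by rewrite -rmulA ca1 rmulC rmul1.
rewrite -rmulA [rmul c b]rmulC rmulA ub_va.
by rewrite -rmulA [rmul a c]rmulC ca1 rmulC rmul1.
Qed.

Lemma rone_m_in_C1 m : b = rmul m a -> (rone k, m) \in C1 a b.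
Proof. by move=> ->; rewrite inE /= rmul1 addr_eq0 oppr_F2. Qed.

End BicycleCodes.

Theorem lemma1 (n : nat) (a b m : Rn n) :
  b = rmul m a ->
  (0 < GB_dim a b)%N ->
  (GB_distance a b <= wt m + 1)%N.
Proof.
move=> b_ma dim_gt0.
have {dim_gt0} C1_neq_C2 : C1 a b != C2 a b.
  move: dim_gt0; apply: contraTneq => C1_eq_C2.
  by rewrite /GB_dim C1_eq_C2 subnn.
case: n a b m b_ma C1_neq_C2 => [|k] a b m b_ma C1_neq_C2.
  by rewrite C1_eq_C2_rV0 eqxx in C1_neq_C2.
have one_m_logical : (rone k, m) \in C1 a b :\: C2 a b.
  rewrite inE rone_m_in_C1 // andbT.
  apply: contra C1_neq_C2 => /imsetP[c _ [ca _]].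
  by rewrite (C1_eq_C2_of_unit b (esym ca)).
have -> : (wt m + 1 = wt2 (rone k, m))%N by rewrite /wt2 /= wt_rone addnC.
exact: leq_trans (geq_minl _ _) (min_wt_le one_m_logical).
Qed.
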